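(* Let $(\Omega,T)$ be a minimal subshift over a finite alphabet $A$ such that no word in $L_5(\Omega)$ has repeated letters. Let $w=w_0\cdots w_{n-1}\in A^n$ with $n\geq4$. Then $w\in L(\Omega)$ if and only if $$\sigma_{[.w_0w_1]}\ast\Big(\sigma_{[.w_1w_2]}\ast\cdots\ast\big(\sigma_{[.w_{n-4}w_{n-3}]}\ast\sigma_{[w_{n-3}.w_{n-2}w_{n-1}]}\big)\cdots\Big)\neq 1\ \text{ in } G_T'.$$
   Context: $T$ is the left shift $(T\omega)_m=\omega_{m+1}$ on $A^{\mathbb Z}$; a minimal subshift is a closed shift-invariant $\Omega\subseteq A^{\mathbb Z}$ with every orbit dense. Words are indexed from $0$; $L_m(\Omega)$ is the set of words of length $m$ occurring in sequences of $\Omega$, $L(\Omega)=\bigcup_mL_m(\Omega)$. For words $u,v$ over $A$ (either may be empty), $[u.v]=\{\omega\in\Omega:\omega_{-i}=u_{|u|-i}\ (1\leq i\leq|u|),\ \omega_i=v_i\ (0\leq i\leq|v|-1)\}$ (possibly empty). For a clopen $U$ with $U,TU,T^2U$ pairwise disjoint, $\sigma_U(\omega)=T\omega$ on $U\cup TU$, $\sigma_U(\omega)=T^{-2}\omega$ on $T^2U$, $\sigma_U(\omega)=\omega$ elsewhere; $\sigma_\emptyset=1$. $G_T$ is the group of homeomorphisms $S$ of $\Omega$ with $S(x)=T^{f_S(x)}x$ for a continuous $f_S:\Omega\to\mathbb Z$; $G_T'$ its commutator subgroup. For group elements $r,s$, $r\ast s:=s\,r^{-1}s^{-1}r$. *)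

From Stdlib Require Import ZArith ClassicalEpsilon.
From mathcomp Require Import all_boot.
Set Implicit Arguments. Unset Strict Implicit. Unset Printing Implicit Defensive.

Section Subshift.
Variable A : finType.

Definition config := Z -> A.

Definition shiftn (k : Z) (x : config) : config := fun m => x (m + k)%Z.
Definition shift (x : config) : config := shiftn 1 x.

(* Closedness in the product topology (A discrete): a point all of whose
   central windows are matched by points of Om lies in Om. *)
Definition closed_set (Om : config -> Prop) : Prop :=
  forall x, (forall N : nat, exists y, Om y /\
                forall i : Z, (Z.abs i <= Z.of_nat N)%Z -> y i = x i) -> Om x.

Definition shift_invariant (Om : config -> Prop) : Prop :=
  forall x, Om x <-> Om (shift x).

Definition orbits_dense (Om : config -> Prop) : Prop :=
  forall x y, Om x -> Om y -> forall N : nat, exists k : Z,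
    forall i : Z, (Z.abs i <= Z.of_nat N)%Z -> shiftn k x i = y i.

Definition minimal_subshift (Om : config -> Prop) : Prop :=
  [/\ closed_set Om, shift_invariant Om & orbits_dense Om].

(* u occurs in Om (u in L(Om)); words indexed from 0. *)
Definition in_L (Om : config -> Prop) (u : seq A) : Prop :=
  exists x, Om x /\ [seq x (Z.of_nat i) | i <- iota 0 (size u)] = u.

Definition cyl (Om : config -> Prop) (u v : seq A) (x : config) : Prop :=
  Om x /\
  [seq x (Z.of_nat i - Z.of_nat (size u))%Z | i <- iota 0 (size u)] = u /\
  [seq x (Z.of_nat i) | i <- iota 0 (size v)] = v.

Definition decP (P : Prop) : bool :=
  if excluded_middle_informative P then true else false.

(* sigma_U : T on U \cup TU, T^{-2} on T^2 U, identity elsewhere.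
   x \in T^k U iff T^{-k} x \in U. *)
Definition sigma (U : config -> Prop) (x : config) : config :=
  if decP (U x \/ U (shiftn (-1) x)) then shift x
  else if decP (U (shiftn (-2) x)) then shiftn (-2) x
  else x.

(* Its inverse (when U, TU, T^2U are pairwise disjoint):
   T^2 on U, T^{-1} on TU \cup T^2U, identity elsewhere. *)
Definition sigma_inv (U : config -> Prop) (x : config) : config :=
  if decP (U x) then shiftn 2 x
  else if decP (U (shiftn (-1) x) \/ U (shiftn (-2) x)) then shiftn (-1) x
  else x.

Record gelt := GElt { gfun : config -> config; ginvfun : config -> config }.

Definition gmul (r s : gelt) : gelt :=
  GElt (fun x => gfun r (gfun s x)) (fun x => ginvfun s (ginvfun r x)).
Definition ginv (r : gelt) : gelt := GElt (ginvfun r) (gfun r).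
Definition gone : gelt := GElt id id.

Definition gstar (r s : gelt) : gelt :=
  gmul s (gmul (ginv r) (gmul (ginv s) r)).

Definition gsigma (U : config -> Prop) : gelt := GElt (sigma U) (sigma_inv U).

Definition word_elt (Om : config -> Prop) (w : seq A) : gelt :=
  match w with
  | [::] => gone
  | a :: _ =>
    let n := size w in
    let c i := nth a w i in
    foldr gstar (gsigma (cyl Om [:: c (n - 3)] [:: c (n - 2); c (n - 1)]))
      [seq gsigma (cyl Om [::] [:: c i; c i.+1]) | i <- iota 0 (n - 3)]
  end.

(* An element of G_T is 1 iff it acts as the identity on Om. *)
Definition is_one_on (Om : config -> Prop) (g : gelt) : Prop :=
  forall x, Om x -> gfun g x = x.

End Subshift.

(** The element [sigma_U] acts on the orbit of a point as a 3-cycle on each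
    block of three consecutive visit times of [U].  When the blocks of [U]
    and of [S] are far apart except for blocks meeting in a single point, the
    element [sigma_U * sigma_S] is again such a family of 3-cycles: it equals
    [sigma_R] for the cylinder [R] of points sitting at those meeting points.
    If no word of length 5 has a repeated letter, the cylinders [[.w_i w_{i+1}]]
    and [[w_{i+1}. w_{i+2} ... w_{n-1}]] are positioned in exactly this way, so
    by induction the whole product is [sigma_W] with [W = [w_0. w_1 ... w_{n-1}]].
    Finally [sigma_W] is trivial iff [W] is empty, i.e. iff [w] does not occur. *)

From Stdlib Require Import ZArith Lia Classical ClassicalEpsilon.
From Stdlib Require Import FunctionalExtensionality PropExtensionality.
From Pilot Require Import Defs.
From mathcomp Require Import all_boot zify.
Set Implicit Arguments. Unset Strict Implicit.

Lemma map_iota0_eq (T : Type) (x0 : T) (f : nat -> T) (s : seq T) :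
  [seq f i | i <- iota 0 (size s)] = s <->
  forall j, (j < size s)%N -> f j = nth x0 s j.
Proof.
split=> [Ef j lt_j | Ef].
  by rewrite -[in RHS]Ef (nth_map 0%N) ?size_iota // nth_iota.
rewrite -[RHS](mkseq_nth x0) /mkseq; apply/eq_in_map => j.
by rewrite mem_iota add0n => /Ef.
Qed.

Lemma decPP (P : Prop) : (P /\ Defs.decP P = true) \/ (~ P /\ Defs.decP P = false).
Proof. by rewrite /Defs.decP; case: (excluded_middle_informative P); tauto. Qed.

Lemma decPT (P : Prop) : P -> Defs.decP P = true.
Proof. by case: (decPP P) => -[]. Qed.

Lemma decPF (P : Prop) : ~ P -> Defs.decP P = false.
Proof. by case: (decPP P) => -[]. Qed.

Section Shifts.
Variable A : finType.
Implicit Types (x : config A) (Om : config A -> Prop).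

Lemma shiftnD (a b : Z) x : shiftn a (shiftn b x) = shiftn (b + a) x.
Proof. by apply: functional_extensionality => m; rewrite /shiftn; f_equal; lia. Qed.

Lemma shiftn0 x : shiftn 0 x = x.
Proof. by apply: functional_extensionality => m; rewrite /shiftn Z.add_0_r. Qed.

Lemma shift_invariant_shiftn Om x k :
  shift_invariant Om -> Om x -> Om (shiftn k x).
Proof.
move=> Om_sh Om_x; elim/Z.peano_ind: k => [|k|k]; first by rewrite shiftn0.
- by move/Om_sh; rewrite /shift shiftnD.
- by move=> Om_k; apply/Om_sh; rewrite /shift shiftnD Z.add_1_r Z.succ_pred.
Qed.

End Shifts.

Section OrbitIndices.
Implicit Types (u s : Z -> Prop) (k : Z).

Definition sigmaZ u k : Z :=
  if Defs.decP (u k \/ u (k - 1)%Z) then (k + 1)%Z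
  else if Defs.decP (u (k - 2)%Z) then (k - 2)%Z else k.

Definition sigmaZ_inv u k : Z :=
  if Defs.decP (u k) then (k + 2)%Z
  else if Defs.decP (u (k - 1)%Z \/ u (k - 2)%Z) then (k - 1)%Z else k.

Definition separated u : Prop :=
  forall i j, u i -> u j -> (Z.abs (i - j) <= 4)%Z -> i = j.

Definition linked u s : Prop :=
  forall i j, u i -> s j -> (Z.abs (j - i - 2) <= 4)%Z -> j = (i + 2)%Z.

Definition meet u s (t : Z) : Prop := u (t - 1)%Z /\ s (t + 1)%Z.

Ltac case_innermost_decP :=
  match goal with |- context [Defs.decP ?P] =>
    lazymatch P with
    | context [Defs.decP _] => fail
    | _ => let H := fresh "H" in
           destruct (decPP P) as [[H ->]|[H ->]]; cbv beta iota
    end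
  end.

Ltac split_props :=
  repeat match goal with
  | H : _ \/ _ |- _ => destruct H
  | H : _ /\ _ |- _ => destruct H
  | H : ~ (_ \/ _) |- _ => apply Decidable.not_or in H
  | H : ~ (?P /\ ?Q) |- _ => destruct (classic P); [assert (~ Q) by tauto|]; clear H
  end.

Ltac refute_positions u s sep_u sep_s link :=
  match goal with
  | H1 : u ?p, H2 : ~ u ?q |- _ => exfalso; apply H2; replace q with p by lia; exact H1
  | H1 : s ?p, H2 : ~ s ?q |- _ => exfalso; apply H2; replace q with p by lia; exact H1
  | H1 : u ?p, H2 : u ?q |- _ => have E := sep_u p q H1 H2 ltac:(lia); exfalso; lia
  | H1 : s ?p, H2 : s ?q |- _ => have E := sep_s p q H1 H2 ltac:(lia); exfalso; lia
  | H1 : u ?p, H2 : s ?q |- _ => have E := link p q H1 H2 ltac:(lia); exfalso; lia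
  end.

(* A commutator of two 3-cycles sharing exactly one point is a 3-cycle; all
   other relative positions of the visits are excluded by the hypotheses. *)
Lemma sigmaZ_star u s : separated u -> separated s -> linked u s -> forall k,
  sigmaZ s (sigmaZ_inv u (sigmaZ_inv s (sigmaZ u k))) = sigmaZ (meet u s) k /\
  sigmaZ_inv u (sigmaZ s (sigmaZ u (sigmaZ_inv s k))) = sigmaZ_inv (meet u s) k.
Proof.
move=> sep_u sep_s link k; split; rewrite /sigmaZ /sigmaZ_inv /meet;
repeat (case_innermost_decP; split_props; try refute_positions u s sep_u sep_s link);
lia.
Qed.

End OrbitIndices.

Section SigmaOnOrbits.
Variables (A : finType) (Om : config A -> Prop).
Hypothesis Om_sh : shift_invariant Om.
Implicit Types (x y : config A) (U S R : config A -> Prop) (g : gelt A).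

Definition visits U x : Z -> Prop := fun i => U (shiftn i x).

Lemma sigma_shiftn U x k : sigma U (shiftn k x) = shiftn (sigmaZ (visits U x) k) x.
Proof.
rewrite /sigma /sigmaZ /visits /shift !shiftnD.
rewrite -[(k + -1)%Z]/(k - 1)%Z -[(k + -2)%Z]/(k - 2)%Z.
by case: Defs.decP => //; case: Defs.decP.
Qed.

Lemma sigma_inv_shiftn U x k :
  sigma_inv U (shiftn k x) = shiftn (sigmaZ_inv (visits U x) k) x.
Proof.
rewrite /sigma_inv /sigmaZ_inv /visits !shiftnD.
rewrite -[(k + -1)%Z]/(k - 1)%Z -[(k + -2)%Z]/(k - 2)%Z.
by case: Defs.decP => //; case: Defs.decP.
Qed.

Definition acts_as_sigma g U : Prop :=
  forall y, Om y -> gfun g y = sigma U y /\ ginvfun g y = sigma_inv U y.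

Lemma gstar_sigma U S R g :
  (forall x, Om x -> separated (visits U x)) ->
  (forall x, Om x -> separated (visits S x)) ->
  (forall x, Om x -> linked (visits U x) (visits S x)) ->
  (forall x t, Om x -> visits R x t <-> meet (visits U x) (visits S x) t) ->
  acts_as_sigma g S -> acts_as_sigma (gstar (gsigma U) g) R.
Proof.
move=> sep_U sep_S link visits_R g_S y Om_y.
have g_shiftn k : gfun g (shiftn k y) = sigma S (shiftn k y) /\
                  ginvfun g (shiftn k y) = sigma_inv S (shiftn k y).
  exact: g_S (shift_invariant_shiftn k Om_sh Om_y).
have meet_R : visits R y = meet (visits U y) (visits S y).
  apply: functional_extensionality => t.
  by apply: propositional_extensionality; apply: visits_R.
have [star star_inv] := sigmaZ_star (sep_U y Om_y) (sep_S y Om_y) (link y Om_y) 0.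
rewrite -(shiftn0 y) /gstar /=; split.
- do 6 rewrite ?sigma_shiftn ?sigma_inv_shiftn ?(g_shiftn _).1 ?(g_shiftn _).2.
  by rewrite meet_R star.
- do 6 rewrite ?sigma_shiftn ?sigma_inv_shiftn ?(g_shiftn _).1 ?(g_shiftn _).2.
  by rewrite meet_R star_inv.
Qed.

Lemma sigma_id U x : (forall y, Om y -> ~ U y) -> Om x -> sigma U x = x.
Proof.
move=> U_empty Om_x.
have notU k : ~ U (shiftn k x) by exact: U_empty (shift_invariant_shiftn k Om_sh Om_x).
rewrite -[x in sigma U x]shiftn0 sigma_shiftn /sigmaZ !decPF ?shiftn0 //.
- exact: notU.
- by case; apply: notU.
Qed.

Lemma sigma_shift U x : U x -> sigma U x = shift x.
Proof. by move=> U_x; rewrite /sigma decPT //; left. Qed.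

End SigmaOnOrbits.

Section ProductOfCylinders.
Variables (A : finType) (Om : config A -> Prop).
Hypothesis Om_sh : shift_invariant Om.
Hypothesis Om_norep : forall u : seq A, in_L Om u -> size u = 5 -> uniq u.
Implicit Types (x y : config A) (U S : config A -> Prop).

Lemma close_letters_eq x p q :
  Om x -> (Z.abs (p - q) <= 4)%Z -> x p = x q -> p = q.
Proof.
move=> Om_x close Exy; set m := Z.min p q.
set u := [seq shiftn m x (Z.of_nat j) | j <- iota 0 5].
have u_uniq : uniq u.
  apply: Om_norep; last by rewrite size_map size_iota.
  by exists (shiftn m x); split; [exact: shift_invariant_shiftn|rewrite size_map size_iota].
have nth_u j : (j < 5)%N -> nth (x p) u j = x (Z.of_nat j + m)%Z.
  by move=> lt_j; rewrite (nth_map 0%N) ?size_iota // nth_iota.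
have lt_p : (Z.to_nat (p - m) < 5)%N by lia.
have lt_q : (Z.to_nat (q - m) < 5)%N by lia.
have := nth_uniq (x p) _ _ u_uniq; rewrite size_map size_iota => /(_ _ _ lt_p lt_q).
rewrite !nth_u // !Z2Nat.id; try lia.
by rewrite !Z.sub_add Exy eqxx => /esym/eqP; lia.
Qed.

Lemma shift_neq x : Om x -> shift x <> x.
Proof.
move=> Om_x /(f_equal (fun z => z 0%Z)) shift_x0.
by have := close_letters_eq (p := 1%Z) (q := 0%Z) Om_x ltac:(lia) shift_x0; lia.
Qed.

Lemma separated_visits U m a :
  (forall y, U y -> y m = a) -> forall x, Om x -> separated (visits U x).
Proof.
move=> U_a x Om_x i j /U_a Ui /U_a Uj close.
have := close_letters_eq (p := (m + i)%Z) (q := (m + j)%Z) Om_x ltac:(lia).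
by rewrite /shiftn in Ui Uj; rewrite Ui Uj => /(_ erefl); lia.
Qed.

Lemma linked_visits U S a :
  (forall y, U y -> y 1%Z = a) -> (forall y, S y -> y (-1)%Z = a) ->
  forall x, Om x -> linked (visits U x) (visits S x).
Proof.
move=> U_a S_a x Om_x i j /U_a Ui /S_a Sj close.
have := close_letters_eq (p := (1 + i)%Z) (q := (-1 + j)%Z) Om_x ltac:(lia).
by rewrite /shiftn in Ui Sj; rewrite Ui Sj => /(_ erefl); lia.
Qed.

Lemma cyl_ab a b y : cyl Om [::] [:: a; b] y <-> Om y /\ y 0%Z = a /\ y 1%Z = b.
Proof. by rewrite /cyl /=; split=> [[Om_y [_ [-> ->]]] | [Om_y [-> ->]]]. Qed.

Lemma cyl_abc a b d y :
  cyl Om [:: a] [:: b; d] y <-> Om y /\ y (-1)%Z = a /\ y 0%Z = b /\ y 1%Z = d.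
Proof. by rewrite /cyl /=; split=> [[Om_y [[->] [-> ->]]] | [Om_y [-> [-> ->]]]]. Qed.

Variables (c : nat -> A) (n : nat).

(* [tail_cyl i] is the cylinder [[c_i. c_(i+1) ... c_(n-1)]]. *)
Definition tail_cyl (i : nat) y : Prop :=
  Om y /\ forall j, (j < n - i)%N -> y (Z.of_nat j - 1)%Z = c (i + j)%N.

Definition tail_elt (i : nat) : gelt A :=
  foldr (@gstar A) (gsigma (cyl Om [:: c (n - 3)] [:: c (n - 2); c (n - 1)]))
    [seq gsigma (cyl Om [::] [:: c j; c j.+1]) | j <- iota i (n - 3 - i)].

Lemma tail_eltS i : (i < n - 3)%N ->
  tail_elt i = gstar (gsigma (cyl Om [::] [:: c i; c i.+1])) (tail_elt i.+1).
Proof.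
by move=> lt_i; rewrite /tail_elt (_ : n - 3 - i = (n - 3 - i.+1).+1)%N //; lia.
Qed.

Lemma tail_elt_last :
  tail_elt (n - 3) = gsigma (cyl Om [:: c (n - 3)] [:: c (n - 2); c (n - 1)]).
Proof. by rewrite /tail_elt subnn. Qed.

Lemma tail_cyl_last : (3 <= n)%N ->
  cyl Om [:: c (n - 3)] [:: c (n - 2); c (n - 1)] = tail_cyl (n - 3).
Proof.
move=> n_ge3; apply: functional_extensionality => y; apply: propositional_extensionality.
rewrite cyl_abc /tail_cyl (_ : n - (n - 3) = 3)%N; last lia.
have -> : (n - 2 = n - 3 + 1)%N by lia.
have -> : (n - 1 = n - 3 + 2)%N by lia.
split=> -[Om_y W]; split=> //.
- by case: W => c0 [c1 c2] [|[|[|j]]] //; rewrite addn0.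
- by move: (W 0%N isT) (W 1%N isT) (W 2%N isT); rewrite addn0.
Qed.

Lemma visits_tail_cyl i x t : (i < n - 3)%N -> Om x ->
  visits (tail_cyl i) x t <->
  meet (visits (cyl Om [::] [:: c i; c i.+1]) x) (visits (tail_cyl i.+1) x) t.
Proof.
move=> lt_i Om_x; have Om_shiftn k : Om (shiftn k x) by apply: shift_invariant_shiftn.
rewrite /visits /meet /tail_cyl cyl_ab; split=> [[_ W] | [[_ [c0 c1]] [_ W]]].
- split; split=> //; rewrite /shiftn in W *.
  + have w0 := W 0%N ltac:(lia); have w1 := W 1%N ltac:(lia).
    rewrite addn0 addn1 in w0 w1.
    by split; [rewrite -w0 | rewrite -w1]; f_equal; lia.
  + by move=> j lt_j; rewrite addSnnS -W; [f_equal; lia | lia].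
- split=> // -[_ | j lt_j]; rewrite /shiftn in c0 W *.
  + by rewrite addn0 -c0; f_equal; lia.
  + by rewrite -addSnnS -W; [f_equal; lia | lia].
Qed.

Lemma tail_elt_sigma i : (3 <= n)%N -> (i <= n - 3)%N ->
  acts_as_sigma Om (tail_elt i) (tail_cyl i).
Proof.
move=> n_ge3 le_i; have [d Ed] : exists d, (n - 3 = d + i)%N by exists (n - 3 - i)%N; lia.
clear le_i; elim: d i Ed => [|d IH] i Ed.
  by rewrite (_ : i = n - 3)%N ?tail_elt_last -?tail_cyl_last //; lia.
rewrite tail_eltS; last lia.
apply: (gstar_sigma Om_sh _ _ _ _ (IH i.+1 _)); try lia.
- by apply: (separated_visits (m := 0%Z) (a := c i)) => y /cyl_ab [_ []].
- apply: (separated_visits (m := (-1)%Z) (a := c i.+1)) => y [_ W].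
  by rewrite -(addn0 i.+1) -W; last lia.
- apply: (linked_visits (a := c i.+1)) => [y /cyl_ab [_ []] // | y [_ W]].
  by rewrite -(addn0 i.+1) -W; last lia.
- by move=> x t Om_x; apply: visits_tail_cyl => //; lia.
Qed.

End ProductOfCylinders.

Lemma in_L_tail_cyl (A : finType) (Om : config A -> Prop) (a : A) (w : seq A) :
  shift_invariant Om ->
  in_L Om w <-> exists y, tail_cyl Om (nth a w) (size w) 0 y.
Proof.
move=> Om_sh; split=> [[x [Om_x /(map_iota0_eq a) W]] | [y [Om_y W]]].
- exists (shiftn 1 x); split; first exact: shift_invariant_shiftn.
  by move=> j lt_j; rewrite /shiftn -W; [f_equal; lia | lia].
- exists (shiftn (-1) y); split; first exact: shift_invariant_shiftn.
  by apply/(map_iota0_eq a) => j lt_j; rewrite /shiftn -W; [f_equal; lia | lia].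
Qed.

Lemma word_elt_tail_elt (A : finType) (Om : config A -> Prop) (a : A) (w : seq A) :
  word_elt Om (a :: w) = tail_elt Om (nth a (a :: w)) (size (a :: w)) 0.
Proof. by rewrite /tail_elt subn0. Qed.

Theorem corollary3p7 (A : finType) (Om : config A -> Prop) (w : seq A) :
  minimal_subshift Om ->
  (forall u : seq A, in_L Om u -> size u = 5 -> uniq u) ->
  4 <= size w ->
  (in_L Om w <-> ~ is_one_on Om (word_elt Om w)).
Proof.
case=> _ Om_sh _ Om_norep; case: w => [//|a w] n_ge4.
have W_sigma := tail_elt_sigma Om_sh Om_norep (nth a (a :: w)) (ltnW n_ge4) (leq0n _).
rewrite word_elt_tail_elt (in_L_tail_cyl a _ Om_sh); split.
- move=> [y W_y] id_on; have [Om_y _] := W_y.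
  apply: (shift_neq Om_sh Om_norep Om_y).
  by rewrite -(sigma_shift W_y) -(W_sigma y Om_y).1 id_on.
- move=> not_id; apply: NNPP => no_W; apply: not_id => x Om_x.
  rewrite (W_sigma x Om_x).1; apply: (sigma_id Om_sh) Om_x => y _ W_y.
  by apply: no_W; exists y.
Qed.
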